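(* Let $\{B^i\}_{i=1}^N$ be complex $n\times n$ matrices and $L\in\mathbb N$. If both $\{B^{i_1}\cdots B^{i_L}:\sum_{k}|i_k|\equiv0\pmod 2\}$ and $\{B^{i_1}\cdots B^{i_L}:\sum_k|i_k|\equiv1\pmod2\}$ span $\mathrm M_n(\mathbb C)$ as vector spaces, then both $\{B^{i_1}\cdots B^{i_{L+1}}:\sum_{k}|i_k|\equiv0\}$ and $\{B^{i_1}\cdots B^{i_{L+1}}:\sum_k|i_k|\equiv1\}$ span $\mathrm M_n(\mathbb C)$.
   Context: $i\mapsto|i|\in\{0,1\}$ is a fixed parity function on $\{1,\dots,N\}$. *)

(* complex numbers are (complex R) = R[i] for R : realType. *)
From HB Require Import structures.
From mathcomp Require Import all_boot all_order all_algebra.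
From mathcomp Require Import complex.
From mathcomp Require Import reals.
Set Implicit Arguments. Unset Strict Implicit. Unset Printing Implicit Defensive.
Import Order.TTheory GRing.Theory Num.Theory.
Local Open Scope ring_scope.

Definition wordprod (F : pzRingType) (n N L : nat) (B : 'I_N -> 'M[F]_n)
  (w : {ffun 'I_L -> 'I_N}) : 'M[F]_n :=
  \prod_(k < L) B (w k).

(* total parity weight sum_k |w_k| (as a natural number) *)
Definition wordweight (N L : nat) (par : 'I_N -> bool) (w : {ffun 'I_L -> 'I_N}) : nat :=
  (\sum_(k < L) (par (w k) : nat))%N.

Definition parspan (F : fieldType) (n N L : nat) (B : 'I_N -> 'M[F]_n)
  (par : 'I_N -> bool) (b : bool) : {vspace 'M[F]_n} :=
  (<< [seq wordprod B w | w in [pred w : {ffun 'I_L -> 'I_N} | odd (wordweight par w) == b]] >>)%VS.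

From HB Require Import structures.
From mathcomp Require Import all_boot all_order all_algebra.
From mathcomp Require Import complex.
From mathcomp Require Import reals.
Set Implicit Arguments. Unset Strict Implicit. Unset Printing Implicit Defensive.
Import Order.TTheory GRing.Theory Num.Theory.
Local Open Scope ring_scope.

(* Left multiplication by B^i maps the span of parity-c words of length L
   into the span of parity-(|i| + c) words of length L+1.  For L >= 1 the
   identity is a combination of words B^{w_0} (B^{w_1} ... B^{w_(L-1)}), so
   every M = 1 M is a combination of terms B^{w_0} Y with Y = B^{w_1} ... M;
   since both parity spans of length L are full, each Y can be taken of
   the parity c = |w_0| + b, which puts B^{w_0} Y in the parity-b span of
   length L+1.  For L = 0 the odd span is trivial, so the hypothesis forces
   the matrix space itself to be trivial. *)

Lemma span_linear_mem (F : fieldType) (vT : vectType F) (X : seq vT)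
    (U : {vspace vT}) (f : {linear vT -> vT}) :
  {in X, forall x, f x \in U} -> {in <<X>>%VS, forall y, f y \in U}.
Proof.
move=> fXU y /(@coord_span _ _ _ (in_tuple X)) ->.
rewrite linear_sum; apply: memv_suml => i _; rewrite linearZ; apply: memvZ.
exact/fXU/mem_nth.
Qed.

Definition word_cons (N L : nat) (i : 'I_N) (w : {ffun 'I_L -> 'I_N}) :
    {ffun 'I_L.+1 -> 'I_N} :=
  [ffun k => if unlift ord0 k is Some k' then w k' else i].

Lemma wordprod_cons (F : pzRingType) (n N L : nat) (B : 'I_N -> 'M[F]_n)
    (i : 'I_N) (w : {ffun 'I_L -> 'I_N}) :
  wordprod B (word_cons i w) = B i *m wordprod B w.
Proof.
rewrite /wordprod big_ord_recl mulmxE ffunE unlift_none; congr (_ * _).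
by apply: eq_bigr => k _; rewrite ffunE liftK.
Qed.

Lemma wordweight_cons (N L : nat) (par : 'I_N -> bool) (i : 'I_N)
    (w : {ffun 'I_L -> 'I_N}) :
  wordweight par (word_cons i w) = (par i + wordweight par w)%N.
Proof.
rewrite /wordweight big_ord_recl ffunE unlift_none; congr (_ + _)%N.
by apply: eq_bigr => k _; rewrite ffunE liftK.
Qed.

Section ParitySpans.
Variables (F : fieldType) (n N : nat) (par : 'I_N -> bool) (B : 'I_N -> 'M[F]_n).

Lemma wordprod_mem_parspan L b (w : {ffun 'I_L -> 'I_N}) :
  odd (wordweight par w) = b -> wordprod B w \in parspan L B par b.
Proof. by move=> wb; apply/memv_span/imageP; exists w; rewrite // inE wb. Qed.

Lemma mulmx_mem_parspanS L c i X : X \in parspan L B par c ->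
  B i *m X \in parspan L.+1 B par (par i (+) c).
Proof.
apply: (@span_linear_mem _ _ _ _ (mulmx (B i))) => _ /imageP [w wc ->] /=.
rewrite -wordprod_cons; apply: wordprod_mem_parspan.
by rewrite wordweight_cons oddD oddb (eqP wc).
Qed.

Lemma parspan0_odd : parspan 0 B par true = 0%VS.
Proof.
apply/eqP; rewrite -subv0; apply/span_subvP => x /imageP [w w_odd _].
by move: w_odd; rewrite inE /wordweight big_ord0.
Qed.

Lemma parspanS_full L b :
  parspan L B par false = fullv -> parspan L B par true = fullv ->
  parspan L.+1 B par b = fullv.
Proof.
move=> full_even full_odd; apply/eqP; rewrite eqEsubv subvf /=.
apply/subvP => M _.
case: L full_even full_odd => [|L] full_even full_odd.
  suff -> : M = 0 by rewrite mem0v.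
  by apply/eqP; rewrite -memv0 -parspan0_odd full_odd memvf.
have one_even : (1 : 'M[F]_n) \in parspan L.+1 B par false.
  by rewrite full_even memvf.
rewrite -(mul1mx M).
apply: (@span_linear_mem _ _ _ _ (mulmxr M)) one_even => _ /imageP [w _ ->] /=.
rewrite /wordprod big_ord_recl -mulmxE -mulmxA.
have Y_full c (Y : 'M[F]_n) : Y \in parspan L.+1 B par c.
  by case: c; rewrite ?full_even ?full_odd memvf.
by have := mulmx_mem_parspanS (w ord0) (Y_full (par (w ord0) (+) b) _);
  rewrite addbA addbb.
Qed.

End ParitySpans.

Theorem mainTheorem5 (R : realType) (n N L : nat) (par : 'I_N -> bool)
  (B : 'I_N -> 'M[R[i]]_n) :
  parspan L B par false = fullv ->
  parspan L B par true = fullv ->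
  parspan L.+1 B par false = fullv /\ parspan L.+1 B par true = fullv.
Proof. by move=> full_even full_odd; split; apply: parspanS_full. Qed.
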